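(* Fix a finite set $\Phi$ of $g$ groups and probabilities $p_{jk}\in[0,1]$ for $j,k\in\Phi$. For each $m$, let $V$ be a set of $m$ vertices, each assigned to a group by an arbitrary map $\varphi:V\to\Phi$, and let $\mathcal D$ be the random directed graph on $V$ in which each arc $(u,v)$, $u\ne v$, is present independently with probability $p_{\varphi(u)\varphi(v)}$. Let $\mathcal G$ be the undirected mutual-compatibility graph of $\mathcal D$ ($u,v$ adjacent iff both $(u,v)$ and $(v,u)$ are arcs). Then there is a constant $D>0$ depending only on $g$ and the $p_{jk}$ (not on $m$ or $\varphi$) such that $\mathbb E[\nu(\mathcal G)]\le D\log m$ for all $m\ge 2$, and $\Pr\big(\nu(\mathcal G)\le D\log m\big)\to 1$ as $m\to\infty$.
   Context: A set of odd cycles $\{c_1,\dots,c_l\}$ of an undirected graph is independent if the cycles are pairwise vertex-disjoint and no edge joins a vertex of $c_i$ to a vertex of $c_j$ for $i\ne j$; $\nu(\mathcal G)$ is the maximum size of an independent set of odd cycles of $\mathcal G$. *)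

From HB Require Import structures.
From mathcomp Require Import all_boot all_order all_algebra.
From mathcomp Require Import all_classical all_reals exp.
Set Implicit Arguments. Unset Strict Implicit. Unset Printing Implicit Defensive.
Import Order.TTheory GRing.Theory Num.Theory.
Local Open Scope ring_scope.

Definition odd_cycle_set (V : finType) (adj : rel V) (C : {set V}) : Prop :=
  exists s : seq V, [/\ uniq s, (3 <= size s)%N, odd (size s),
                        path.cycle adj s & C = [set x in s]].

(** An independent set of odd cycles (represented by their vertex sets; since
    the cycles are pairwise vertex-disjoint, distinct cycles have distinct
    vertex sets, and independence only depends on the vertex sets). *)
Definition indep_odd_cycles (V : finType) (adj : rel V) (F : {set {set V}}) : Prop :=
  (forall C, C \in F -> odd_cycle_set adj C) /\
  (forall C1 C2, C1 \in F -> C2 \in F -> C1 != C2 ->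
     [disjoint C1 & C2] /\ (forall u v, u \in C1 -> v \in C2 -> ~~ adj u v)).

Definition nu (V : finType) (adj : rel V) : nat :=
  \max_(F : {set {set V}} | `[< indep_odd_cycles adj F >]) #|F|.

Definition digraph (m : nat) := {ffun 'I_m * 'I_m -> bool}.

(** Probability weight of the digraph [A] in the model where each arc (u,v),
    u <> v, is present independently with probability p (phi u) (phi v);
    loops are never present. *)
Definition dg_weight (R : realType) (g m : nat) (p : 'I_g -> 'I_g -> R)
    (phi : 'I_m -> 'I_g) (A : digraph m) : R :=
  \prod_(uv : 'I_m * 'I_m)
     (if uv.1 == uv.2 then (~~ A uv)%:R
      else if A uv then p (phi uv.1) (phi uv.2) else 1 - p (phi uv.1) (phi uv.2)).

Definition mutual (m : nat) (A : digraph m) : rel 'I_m :=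
  fun u v => [&& u != v, A (u, v) & A (v, u)].

Definition dg_expect (R : realType) (g m : nat) (p : 'I_g -> 'I_g -> R)
    (phi : 'I_m -> 'I_g) (X : digraph m -> R) : R :=
  \sum_(A : digraph m) dg_weight p phi A * X A.

Definition dg_prob (R : realType) (g m : nat) (p : 'I_g -> 'I_g -> R)
    (phi : 'I_m -> 'I_g) (E : pred (digraph m)) : R :=
  \sum_(A : digraph m | E A) dg_weight p phi A.

(* If nu is large, pigeonhole gives k independent odd cycles carrying edges
   u_i v_i of one colour pair (a, b); the tuples u, v are disjoint and u_i is
   adjacent to v_j exactly when i = j.  The k^2 events of this induced matching
   concern pairwise distinct pairs of arcs, so a fixed pair of tuples forms one
   with probability at most q^k (1 - q)^(k(k-1)), q = p_ab p_ba.  A union bound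
   over the g^2 m^(2k) candidates gives Pr(nu > g^2 (k - 1)) <= g^2 / m as soon
   as (1 - q)^(k-1) <= m^-3, that is for k - 1 of order log m.  Since nu <= m,
   this bounds both the expectation and the tail. *)

From HB Require Import structures.
From mathcomp Require Import all_boot all_order all_algebra.
From mathcomp Require Import all_classical all_reals exp.
From mathcomp Require Import ring lra.
Import Order.TTheory GRing.Theory Num.Theory.
Set Implicit Arguments. Unset Strict Implicit. Unset Printing Implicit Defensive.

Lemma pigeonhole_fiber (T I : finType) (f : T -> I) (F : {set T}) k :
  (#|I| * k.-1 < #|F|)%N -> exists i, (k <= #|[set x in F | f x == i]|)%N.
Proof.
move=> bigF; apply/existsP; apply: contraLR bigF => /existsPn small.
rewrite -leqNgt -sum1_card (partition_big f xpredT) //= -sum_nat_const.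
apply: leq_sum => i _.
rewrite sum1dep_card; have := small i; rewrite cardsE -ltnNge.
by case: k {small}.
Qed.

Lemma exists_injective_in (T : finType) (S : {set T}) k :
  (k <= #|S|)%N -> exists2 h : 'I_k -> T, injective h & forall i, h i \in S.
Proof.
move=> kS; exists (fun i => enum_val (widen_ord kS i)) => [i j /enum_val_inj|i].
  by move=> /(congr1 val) /= /val_inj.
exact: enum_valP.
Qed.

Section IndependentOddCycles.
Variables (V : finType) (adj : rel V).

Lemma odd_cycle_set_edge C :
  odd_cycle_set adj C -> exists x y, [/\ x \in C, y \in C, x != y & adj x y].
Proof.
move=> [[|x [|y s]] [uniq_s _ _ cyc ->]] //=.
move: uniq_s cyc => /= /andP [+ _] /andP [xy _]; rewrite inE negb_or => /andP [x_y _].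
by exists x, y; rewrite !inE !eqxx ?orbT.
Qed.

Lemma nu_attained : exists2 F, indep_odd_cycles adj F & nu adj = #|F|.
Proof.
have indep0 : `[< indep_odd_cycles adj finset.set0 >].
  by apply/asboolP; split => [C|C1 C2]; rewrite inE.
rewrite /nu (bigop.bigmax_eq_arg _ indep0).
by case: arg_maxnP => // F /asboolP indepF _; exists F.
Qed.

Lemma nu_le_card : (nu adj <= #|V|)%N.
Proof.
have [F [cycF indepF] ->] := nu_attained.
have trivF : finset.trivIset F.
  by apply/finset.trivIsetP => C1 C2 C1F C2F neC; case: (indepF C1 C2 C1F C2F neC).
have nonemptyF C : C \in F -> (0 < #|C|)%N.
  by move=> /cycF /odd_cycle_set_edge [x [_ [xC _ _ _]]]; apply/card_gt0P; exists x.
rewrite -sum1_card (@leq_trans (\sum_(C in F) #|C|)) ?leq_sum //.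
by rewrite (eqP trivF) max_card.
Qed.

Definition matching_frame (K : finType) (col : V -> K) (a b : K) k
    (u v : {ffun 'I_k -> V}) :=
  [&& injectiveb u, injectiveb v, [forall i, forall j, u i != v j],
      [forall i, col (u i) == a] & [forall i, col (v i) == b]].

Definition induced_matching k (u v : 'I_k -> V) :=
  [forall i, forall j, adj (u i) (v j) == (i == j)].

Lemma induced_matching_of_indep_odd_cycles (K : finType) (col : V -> K) F k :
  indep_odd_cycles adj F -> (#|K| * #|K| * k.-1 < #|F|)%N ->
  exists a b (u v : {ffun 'I_k -> V}),
    matching_frame col a b u v && induced_matching u v.
Proof.
move=> [cycF indepF] bigF.
have [C0 C0F] : exists C0, C0 \in F.
  by apply/set0Pn; rewrite -card_gt0; apply: leq_ltn_trans bigF.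
have [x0 _] := odd_cycle_set_edge (cycF C0 C0F).
pose edge (C : {set V}) := odflt (x0, x0)
  [pick e | [&& e.1 \in C, e.2 \in C, e.1 != e.2 & adj e.1 e.2]].
have edgeP C : C \in F -> [&& (edge C).1 \in C, (edge C).2 \in C,
    (edge C).1 != (edge C).2 & adj (edge C).1 (edge C).2].
  move=> /cycF /odd_cycle_set_edge [x [y [xC yC x_y xy]]].
  by rewrite /edge; case: pickP => [e -> //|/(_ (x, y))]; rewrite /= xC yC x_y xy.
pose colour C := (col (edge C).1, col (edge C).2).
have [[a b] bigFab] : exists t, (k <= #|[set C in F | colour C == t]|)%N.
  by apply: pigeonhole_fiber; rewrite card_prod.
have [Ci Ci_inj CiF] := exists_injective_in bigFab.
have {}CiF i : Ci i \in F /\ colour (Ci i) = (a, b).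
  by have := CiF i; rewrite inE => /andP [-> /eqP].
have separate i j : i != j -> [disjoint Ci i & Ci j] /\
    (forall x y, x \in Ci i -> y \in Ci j -> ~~ adj x y).
  by move=> ij; apply: indepF; rewrite ?(inj_eq Ci_inj) ?(CiF i).1 ?(CiF j).1.
have same_cycle i j x : x \in Ci i -> x \in Ci j -> i = j.
  move=> xi xj; apply/eqP; apply: contraTT isT => ij.
  by have [/disjointFr/(_ xi) + _] := separate i j ij; rewrite xj.
pose u := [ffun i => (edge (Ci i)).1]; pose v := [ffun i => (edge (Ci i)).2].
have /all_and4 [uCi vCi u_v adj_uv] i :
    [/\ u i \in Ci i, v i \in Ci i, u i != v i & adj (u i) (v i)].
  by have /and4P [] := edgeP _ (CiF i).1; rewrite !ffunE.
exists a, b, u, v; apply/andP; split.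
  apply/and5P; split.
  - by apply/injectiveP => i j uij; apply: (same_cycle _ _ (u i)); rewrite // uij.
  - by apply/injectiveP => i j vij; apply: (same_cycle _ _ (v i)); rewrite // vij.
  - apply/forallP => i; apply/forallP => j; apply: contraNneq (u_v i) => uvij.
    by rewrite uvij (same_cycle j i (v j)) // -uvij.
  - by apply/forallP => i; have [_ [<- _]] := CiF i; rewrite ffunE.
  - by apply/forallP => i; have [_ [_ <-]] := CiF i; rewrite ffunE.
apply/forallP => i; apply/forallP => j; have [<-|ij] := eqVneq i j.
  by rewrite adj_uv.
by have [_ /(_ _ _ (uCi i) (vCi j)) /negbTE ->] := separate i j ij.
Qed.

End IndependentOddCycles.

Local Open Scope ring_scope.

Lemma prod_affine_expand (R : comNzRingType) (S : finType) (al be F : S -> R) :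
  \prod_s (al s + be s * F s) =
  \sum_(J : {set S}) (\prod_s (if s \in J then be s else al s)) * \prod_(s in J) F s.
Proof.
rewrite (eq_bigr (fun s => be s * F s + al s)) => [|s _]; last exact: addrC.
rewrite bigA_distr; apply: eq_bigr => J _.
rewrite [X in _ * X]big_mkcond -big_split; apply: eq_bigr => s _ /=.
by case: ifP; rewrite ?mulr1.
Qed.

Lemma prod_imsetU (R : comNzRingType) (S T : finType) (x y : S -> T)
    (J : {set S}) (G : T -> R) :
  injective x -> injective y -> (forall s s', x s != y s') ->
  \prod_(e in x @: J :|: y @: J) G e = \prod_(s in J) (G (x s) * G (y s)).
Proof.
move=> x_inj y_inj xy.
rewrite (eq_bigl [predU x @: J & y @: J]) => [|e]; last by rewrite !inE.
rewrite bigU; last first.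
  apply/pred0P => e /=; apply/negP => /andP [/imsetP [s _ ->] /imsetP [s' _]].
  by apply/eqP; rewrite xy.
by rewrite big_split /= !big_imset // => ? ? _ _; [apply: y_inj|apply: x_inj].
Qed.

Lemma natr_eqb_andb (R : pzRingType) (a b c : bool) :
  ((c == a && b)%:R : R) = (~~ c)%:R + (if c then 1 else -1) * (a%:R * b%:R).
Proof. by case: a b c => [] [] []; rewrite /= ?mulr1 ?mulr0 ?addr0 ?add0r ?subrr. Qed.

Section ProductMeasure.
Variables (R : realType) (T : finType) (w : T -> bool -> R).

Definition Eprod (X : {ffun T -> bool} -> R) :=
  \sum_(A : {ffun T -> bool}) (\prod_e w e (A e)) * X A.

Lemma Eprod_prod (f : T -> bool -> R) :
  Eprod (fun A => \prod_e f e (A e)) = \prod_e \sum_b w e b * f e b.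
Proof. by rewrite bigA_distr_bigA; apply: eq_bigr => A _; rewrite -big_split. Qed.

Lemma Eprod_sum (I : finType) (X : I -> {ffun T -> bool} -> R) :
  Eprod (fun A => \sum_i X i A) = \sum_i Eprod (X i).
Proof. by rewrite exchange_big; apply: eq_bigr => A _; rewrite mulr_sumr. Qed.

Lemma EprodD X Y : Eprod (fun A => X A + Y A) = Eprod X + Eprod Y.
Proof. by rewrite -big_split; apply: eq_bigr => A _; rewrite mulrDr. Qed.

Lemma EprodZ c X : Eprod (fun A => c * X A) = c * Eprod X.
Proof. by rewrite mulr_sumr; apply: eq_bigr => A _; rewrite mulrCA. Qed.

Hypothesis w_sum1 : forall e, w e true + w e false = 1.

Lemma Eprod_cst c : Eprod (fun => c) = c.
Proof.
have E1 : Eprod (fun => 1) = 1.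
  transitivity (Eprod (fun A => \prod_(e : T) (1 : R))).
    by congr Eprod; apply/funext => A; rewrite big1.
  rewrite (Eprod_prod (fun _ _ => 1)) big1 // => e _.
  by rewrite big_bool /= !mulr1 w_sum1.
transitivity (Eprod (fun => c * 1)); first by rewrite mulr1.
by rewrite EprodZ E1 mulr1.
Qed.

Lemma Eprod_affine c d X : Eprod (fun A => c + d * X A) = c + d * Eprod X.
Proof. by rewrite (EprodD (fun => c) (fun A => d * X A)) Eprod_cst EprodZ. Qed.

Lemma Eprod_indicators (U : {set T}) :
  Eprod (fun A => \prod_(e in U) (A e)%:R) = \prod_(e in U) w e true.
Proof.
transitivity (Eprod (fun A => \prod_e if e \in U then (A e)%:R else 1)).
  by congr Eprod; apply/funext => A; rewrite big_mkcond.
rewrite (Eprod_prod (fun e b => if e \in U then b%:R else 1)) [RHS]big_mkcond.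
apply: eq_bigr => e _.
by rewrite big_bool /=; case: ifP; rewrite ?mulr1 ?mulr0 ?addr0 ?w_sum1.
Qed.

Lemma Eprod_pairs (S : finType) (x y : S -> T) (al be : S -> R) :
  injective x -> injective y -> (forall s s', x s != y s') ->
  Eprod (fun A => \prod_s (al s + be s * ((A (x s))%:R * (A (y s))%:R))) =
  \prod_s (al s + be s * (w (x s) true * w (y s) true)).
Proof.
move=> x_inj y_inj xy; pose c (J : {set S}) := \prod_s (if s \in J then be s else al s).
transitivity (Eprod (fun A => \sum_(J : {set S})
                 c J * \prod_(e in x @: J :|: y @: J) (A e)%:R)).
  congr Eprod; apply/funext => A; rewrite prod_affine_expand.
  by apply: eq_bigr => J _; rewrite prod_imsetU.
rewrite prod_affine_expand Eprod_sum; apply: eq_bigr => J _.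
by rewrite EprodZ Eprod_indicators prod_imsetU.
Qed.

Hypothesis w_ge0 : forall e b, 0 <= w e b.

Lemma Eprod_le X Y : (forall A, X A <= Y A) -> Eprod X <= Eprod Y.
Proof.
by move=> XY; apply: ler_sum => A _; rewrite ler_wpM2l ?prodr_ge0.
Qed.

End ProductMeasure.

(* [1 - q], moved to [1/2] when [q] is [0] or [1] so that [0 < rate q < 1];
   in those two cases the product in [prod_diag_offdiag_le] vanishes anyway. *)
Definition rate (R : numFieldType) (q : R) : R :=
  if (0 < q) && (q < 1) then 1 - q else 2^-1.

Lemma rate_gt0 (R : numFieldType) (q : R) : 0 < rate q.
Proof. by rewrite /rate; case: ifP => [/andP [_ q1]|_]; rewrite ?subr_gt0 ?invr_gt0. Qed.

Lemma rate_lt1 (R : numFieldType) (q : R) : rate q < 1.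
Proof.
rewrite /rate; case: ifP => [/andP [q0 _]|_]; first by rewrite ltrBlDr ltrDl.
by rewrite invf_lt1 // ltr1n.
Qed.

Lemma prod_diag_offdiag_le (R : realFieldType) k (q : R) : (2 <= k)%N -> 0 <= q <= 1 ->
  \prod_(s : 'I_k * 'I_k) (if s.1 == s.2 then q else 1 - q) <= rate q ^+ (k * k.-1).
Proof.
case: k => [//|[//|k]] _ /andP [q0 q1].
have [->|qn0] := eqVneq q 0.
  by rewrite (bigD1 (ord0, ord0)) //= mul0r exprn_ge0 // ltW // rate_gt0.
have [->|qn1] := eqVneq q 1.
  by rewrite (bigD1 (ord0, ord_max)) //= subrr mul0r exprn_ge0 // ltW // rate_gt0.
have rateE : rate q = 1 - q by rewrite /rate !lt_def qn0 q0 eq_sym qn1 q1.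
rewrite -(pair_bigA _ (fun i j => if i == j then q else 1 - q)) /=.
apply: (@le_trans _ _ (\prod_(i : 'I_k.+2) rate q ^+ k.+1)); last first.
  by rewrite prodr_const card_ord -exprM mulnC.
apply: ler_prod => i _; rewrite (bigD1 i) //= eqxx.
rewrite (eq_bigr (fun => 1 - q)) => [|j]; last by rewrite eq_sym => /negbTE ->.
rewrite prodr_const cardC1 card_ord rateE mulr_ge0 ?exprn_ge0 ?subr_ge0 //=.
by rewrite ler_piMl // exprn_ge0 // subr_ge0.
Qed.

Section RandomDigraph.
Variables (R : realType) (g : nat) (p : 'I_g -> 'I_g -> R).
Hypothesis p01 : forall j k, 0 <= p j k <= 1.
Variables (m : nat) (phi : 'I_m -> 'I_g).

Definition arc_weight (e : 'I_m * 'I_m) (b : bool) : R :=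
  if e.1 == e.2 then (~~ b)%:R
  else if b then p (phi e.1) (phi e.2) else 1 - p (phi e.1) (phi e.2).

Local Notation E := (Eprod arc_weight).

Lemma arc_weight_sum1 e : arc_weight e true + arc_weight e false = 1.
Proof. by rewrite /arc_weight; case: ifP => _ /=; rewrite ?add0r // addrC subrK. Qed.

Lemma arc_weight_ge0 e b : 0 <= arc_weight e b.
Proof.
have /andP [p0 p1] := p01 (phi e.1) (phi e.2).
by rewrite /arc_weight; case: ifP; case: b; rewrite ?subr_ge0.
Qed.

Lemma dg_expectE X : dg_expect p phi X = E X.
Proof. by []. Qed.

Lemma dg_probE (P : pred (digraph m)) : dg_prob p phi P = E (fun A => (P A)%:R).
Proof.
rewrite /dg_prob big_mkcond; apply: eq_bigr => A _.
by case: (P A); rewrite ?mulr1 ?mulr0.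
Qed.

Definition matching_ind k (A : digraph m) (u v : 'I_k -> 'I_m) : R :=
  \prod_(s : 'I_k * 'I_k) ((s.1 == s.2) == (A (u s.1, v s.2) && A (v s.2, u s.1)))%:R.

Lemma matching_ind_ge0 k A (u v : 'I_k -> 'I_m) : 0 <= matching_ind A u v.
Proof. exact: prodr_ge0. Qed.

Lemma matching_ind_induced k A (u v : 'I_k -> 'I_m) :
  (forall i j, u i != v j) -> induced_matching (mutual A) u v -> matching_ind A u v = 1.
Proof.
move=> uv /forallP indM; rewrite /matching_ind big1 // => [[i j]] _ /=.
by have /forallP/(_ j)/eqP := indM i; rewrite /mutual uv /= => ->; rewrite eqxx.
Qed.

Lemma Eprod_matching_ind_le k a b (u v : {ffun 'I_k -> 'I_m}) :
  (2 <= k)%N -> matching_frame phi a b u v ->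
  E (fun A => matching_ind A u v) <= rate (p a b * p b a) ^+ (k * k.-1).
Proof.
move=> k2 /and5P [/injectiveP u_inj /injectiveP v_inj /'forall_forallP uv].
move=> /forallP ua /forallP vb.
pose x (s : 'I_k * 'I_k) := (u s.1, v s.2); pose y (s : 'I_k * 'I_k) := (v s.2, u s.1).
have x_inj : injective x by move=> [i j] [i' j'] [/u_inj -> /v_inj ->].
have y_inj : injective y by move=> [i j] [i' j'] [/v_inj -> /u_inj ->].
have xy s s' : x s != y s'.
  by apply/negP => /eqP [us _]; have := uv s.1 s'.2; rewrite us eqxx.
have -> : E (fun A => matching_ind A u v) = E (fun A => \prod_s ((s.1 != s.2)%:R +
    (if s.1 == s.2 then 1 else -1) * ((A (x s))%:R * (A (y s))%:R))).
  by congr Eprod; apply/funext => A; apply: eq_bigr => s _; apply: natr_eqb_andb.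
(* the arcs (u i, v j) and (v j, u i) are pairwise distinct, so the k^2
   factors are independent *)
rewrite (Eprod_pairs arc_weight_sum1 (fun s => (s.1 != s.2)%:R)
  (fun s => if s.1 == s.2 then 1 else -1) x_inj y_inj xy).
rewrite (eq_bigr (fun s : 'I_k * 'I_k =>
  if s.1 == s.2 then p a b * p b a else 1 - p a b * p b a)).
  apply: prod_diag_offdiag_le => //.
  have /andP [pab0 pab1] := p01 a b; have /andP [pba0 pba1] := p01 b a.
  by rewrite mulr_ge0 //= mulr_ile1.
have uvF i j : (u i == v j :> 'I_m) = false by apply/negbTE; exact: uv.
have vuF i j : (v j == u i :> 'I_m) = false by rewrite eq_sym uvF.
move=> s _; rewrite /arc_weight /x /y /= uvF vuF (eqP (ua s.1)) (eqP (vb s.2)).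
by case: (s.1 == s.2); rewrite /= ?add0r ?mul1r // mulN1r.
Qed.

Definition matching_count k (A : digraph m) : R :=
  \sum_(z : ('I_g * 'I_g) * ({ffun 'I_k -> 'I_m} * {ffun 'I_k -> 'I_m}))
     (matching_frame phi z.1.1 z.1.2 z.2.1 z.2.2)%:R * matching_ind A z.2.1 z.2.2.

Lemma matching_count_ge1 k A :
  (g * g * k.-1 < nu (mutual A))%N -> 1 <= matching_count k A.
Proof.
have [F indepF ->] := nu_attained (mutual A); rewrite -{1 2}(card_ord g) => bigF.
have [a [b [u [v /andP [fr indM]]]]] :=
  induced_matching_of_indep_odd_cycles phi indepF bigF.
have /and5P [_ _ /'forall_forallP uv _ _] := fr.
rewrite /matching_count (bigD1 ((a, b), (u, v))) //= fr matching_ind_induced // mulr1.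
by rewrite lerDl sumr_ge0 // => z _; rewrite mulr_ge0 ?matching_ind_ge0.
Qed.

Lemma Eprod_matching_count_le k : (2 <= k)%N ->
    (forall a b, rate (p a b * p b a) ^+ k.-1 <= m%:R^-1 ^+ 3) ->
  E (matching_count k) <= (g * g * (m ^ k * m ^ k))%:R * m%:R^-1 ^+ (3 * k).
Proof.
move=> k2 small_rate; rewrite Eprod_sum.
apply: (@le_trans _ _ (\sum_(z : ('I_g * 'I_g) *
    ({ffun 'I_k -> 'I_m} * {ffun 'I_k -> 'I_m})) m%:R^-1 ^+ (3 * k))); last first.
  by rewrite sumr_const !card_prod card_ffun !card_ord mulr_natl.
apply: ler_sum => [[[a b] [u v]]] _ /=; rewrite EprodZ.
have [fr|_] := boolP (matching_frame phi a b u v).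
  rewrite mul1r (le_trans (Eprod_matching_ind_le k2 fr)) // (mulnC k) !exprM.
  by rewrite lerXn2r ?small_rate // nnegrE exprn_ge0 ?invr_ge0 // ltW ?rate_gt0.
by rewrite mul0r exprn_ge0 ?invr_ge0.
Qed.

Lemma dg_prob_nu_gt_le k : (0 < m)%N -> (2 <= k)%N ->
    (forall a b, rate (p a b * p b a) ^+ k.-1 <= m%:R^-1 ^+ 3) ->
  dg_prob p phi (fun A => (g * g * k.-1 < nu (mutual A))%N) <= (g * g)%:R / m%:R.
Proof.
move=> m0 k2 small_rate; rewrite dg_probE.
apply: le_trans (Eprod_le arc_weight_ge0 (Y := matching_count k) _) _ => [A|].
  case: ltnP => [/matching_count_ge1 //|_].
  by rewrite sumr_ge0 // => z _; rewrite mulr_ge0 ?matching_ind_ge0.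
apply: le_trans (Eprod_matching_count_le k2 small_rate) _.
have m0R : (0 : R) < m%:R by rewrite ltr0n.
rewrite natrM -mulrA ler_wpM2l // natrM !natrX mulnC exprM exprVn.
rewrite (_ : _ * _ * _ = (m%:R ^+ k)^-1); last by field; rewrite expf_neq0 // gt_eqF.
rewrite lef_pV2 ?posrE ?exprn_gt0 //.
by case: k k2 {small_rate} => // k _; rewrite exprS ler_peMr // exprn_ege1 // ler1n.
Qed.

End RandomDigraph.

Section LogarithmicBound.
Variables (R : realType) (g : nat) (p : 'I_g -> 'I_g -> R).

Definition pair_rate (t : 'I_g * 'I_g) := rate (p t.1 t.2 * p t.2 t.1).

Definition Lsum := \sum_t (- ln (pair_rate t))^-1.

(* Lsum * (- ln (pair_rate t)) >= 1 for every t, so depth m factors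
   pair_rate t are at most m^-3 whatever t. *)
Definition depth m := (Num.truncn (3 * Lsum * ln (m%:R : R))).+1.

Definition Dconst := 3 * (g * g)%:R * Lsum + 2 * (g * g)%:R / ln 2 + 1.

Lemma ln_pair_rate_lt0 t : 0 < - ln (pair_rate t).
Proof. by rewrite oppr_gt0 ln_lt0 // rate_gt0 rate_lt1. Qed.

Lemma Lsum_ge0 : 0 <= Lsum.
Proof. by apply: sumr_ge0 => t _; rewrite invr_ge0 ltW // ln_pair_rate_lt0. Qed.

Lemma Lsum_ln_pair_rate_ge1 t : 1 <= Lsum * (- ln (pair_rate t)).
Proof.
have s0 := ln_pair_rate_lt0 t.
rewrite -(mulVf (lt0r_neq0 s0)) ler_pM2r // /Lsum (bigD1 t) //= lerDl.
by rewrite sumr_ge0 // => t' _; rewrite invr_ge0 ltW // ln_pair_rate_lt0.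
Qed.

Lemma pair_rate_depth_le m t : (1 <= m)%N -> pair_rate t ^+ depth m <= m%:R^-1 ^+ 3.
Proof.
move=> m1; have m0 : (0 : R) < m%:R by rewrite ltr0n.
have lnm0 : 0 <= ln (m%:R : R) by rewrite ln_ge0 // ler1n.
have depth_gt := truncnS_gt (3 * Lsum * ln (m%:R : R)).
have rate0 := rate_gt0 (p t.1 t.2 * p t.2 t.1).
rewrite -ler_ln ?posrE ?exprn_gt0 ?invr_gt0 // !lnXn ?invr_gt0 // lnV ?posrE //.
rewrite -[_ *+ depth m]mulr_natl -[_ *+ 3]mulr_natl.
have := ln_pair_rate_lt0 t; have := Lsum_ln_pair_rate_ge1 t.
rewrite -/(depth m) in depth_gt.
set s := - ln (pair_rate t); rewrite -[ln (pair_rate t)]opprK -/s => Ls s0.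
have : 0 <= ((depth m)%:R - 3 * Lsum * ln (m%:R : R)) * s.
  by rewrite mulr_ge0 ?subr_ge0 ?ltW.
have : 0 <= ln (m%:R : R) * (Lsum * s - 1) by rewrite mulr_ge0 ?subr_ge0.
nra.
Qed.

Lemma Dconst_gt0 : 0 < Dconst.
Proof.
have ln2 : (0 : R) < ln 2 by rewrite ln_gt0 // ltr1n.
by apply: ltr_wpDl; rewrite // addr_ge0 // !mulr_ge0 ?Lsum_ge0 ?invr_ge0 // ltW.
Qed.

Lemma depth_le_Dconst m : (2 <= m)%N ->
  (g * g * depth m)%:R + (g * g)%:R <= Dconst * ln (m%:R : R).
Proof.
move=> m2; have ln2 : (0 : R) < ln 2 by rewrite ln_gt0 // ltr1n.
have ln2m : ln 2 <= ln (m%:R : R) by rewrite ler_ln ?posrE ?ler_nat ?ltr0n // ltnW.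
have lnm0 : 0 <= ln (m%:R : R) := le_trans (ltW ln2) ln2m.
have depth_le : (depth m)%:R <= 3 * Lsum * ln (m%:R : R) + 1.
  by rewrite /depth -addn1 natrD lerD2r truncn_le !mulr_ge0 ?Lsum_ge0.
have ratio_ge1 : 1 <= ln (m%:R : R) / ln 2 by rewrite ler_pdivlMr // mul1r.
have -> : Dconst * ln (m%:R : R) = (g * g)%:R * (3 * Lsum * ln (m%:R : R)) +
    2 * (g * g)%:R * (ln (m%:R : R) / ln 2) + ln (m%:R : R).
  by rewrite /Dconst; field; rewrite gt_eqF.
rewrite natrM; set G := (g * g)%:R.
have G0 : 0 <= G by [].
have : G * (depth m)%:R <= G * (3 * Lsum * ln (m%:R : R) + 1) by rewrite ler_wpM2l.
have : 2 * G <= 2 * G * (ln (m%:R : R) / ln 2) by rewrite ler_peMr ?mulr_ge0.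
lra.
Qed.

End LogarithmicBound.

Section MainBounds.
Variables (R : realType) (g : nat) (p : 'I_g -> 'I_g -> R).
Hypothesis p01 : forall j k, 0 <= p j k <= 1.
Variables (m : nat) (phi : 'I_m -> 'I_g).
Hypothesis m2 : (2 <= m)%N.

Local Notation nu_large := (fun A : digraph m => g * g * depth p m < nu (mutual A))%N.

Lemma dg_prob_nu_large_le : dg_prob p phi nu_large <= (g * g)%:R / m%:R.
Proof.
apply: (@dg_prob_nu_gt_le _ _ _ p01 _ _ (depth p m).+1) => //; first exact: ltnW.
by move=> a b; apply: (pair_rate_depth_le p (a, b)); apply: ltnW.
Qed.

Lemma expect_nu_le :
  dg_expect p phi (fun A => (nu (mutual A))%:R) <= Dconst p * ln (m%:R : R).
Proof.
have m0 : (m%:R : R) != 0 by rewrite pnatr_eq0 -lt0n ltnW.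
apply: le_trans (depth_le_Dconst p m2); rewrite dg_expectE.
apply: le_trans (Eprod_le (arc_weight_ge0 p01 phi)
  (Y := fun A => (g * g * depth p m)%:R + m%:R * (nu_large A)%:R) _) _.
  move=> A; case: ltnP => [_|nu_le]; last by rewrite mulr0 addr0 ler_nat.
  by rewrite mulr1 ler_wpDl // ler_nat -[m in (_ <= m)%N]card_ord nu_le_card.
rewrite (Eprod_affine (arc_weight_sum1 p phi)) -(dg_probE _ _ nu_large) lerD2l.
apply: le_trans (ler_wpM2l (ler0n _ m) dg_prob_nu_large_le) _.
by rewrite mulrCA mulfV ?mulr1.
Qed.

Lemma prob_nu_le :
  1 - (g * g)%:R / m%:R <=
    dg_prob p phi (fun A => (nu (mutual A))%:R <= Dconst p * ln (m%:R : R)).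
Proof.
rewrite dg_probE; apply: le_trans (Eprod_le (arc_weight_ge0 p01 phi)
  (X := fun A => 1 + (-1) * (nu_large A)%:R) _).
  rewrite (Eprod_affine (arc_weight_sum1 p phi)) -(dg_probE _ _ nu_large).
  by rewrite mulN1r lerD2l lerN2 dg_prob_nu_large_le.
move=> A; case: ltnP => [_|nu_le]; first by rewrite mulr1 subrr.
rewrite mulr0 addr0; suff -> : (nu (mutual A))%:R <= Dconst p * ln (m%:R : R) by [].
apply: le_trans (depth_le_Dconst p m2).
by rewrite -natrD ler_nat (leq_trans nu_le) ?leq_addr.
Qed.

End MainBounds.

Theorem mainTheorem6 (R : realType) (g : nat) (p : 'I_g -> 'I_g -> R) :
  (forall j k, 0 <= p j k <= 1) ->
  exists D : R, 0 < D /\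
    (forall (m : nat) (phi : 'I_m -> 'I_g), (2 <= m)%N ->
       dg_expect p phi (fun A => (nu (mutual A))%:R) <= D * ln (m%:R)) /\
    (forall eps : R, 0 < eps -> exists M : nat, forall (m : nat) (phi : 'I_m -> 'I_g),
       (M <= m)%N ->
       1 - eps <= dg_prob p phi (fun A => (nu (mutual A))%:R <= D * ln (m%:R))).
Proof.
move=> p01; exists (Dconst p); split; first exact: Dconst_gt0.
split=> [m phi m2|eps eps0]; first exact: expect_nu_le.
exists (maxn 2 (Num.truncn ((g * g)%:R / eps)).+1) => m phi.
rewrite geq_max => /andP [m2 mM].
apply: le_trans (prob_nu_le p01 phi m2); rewrite lerD2l lerN2.
have m0 : (0 : R) < m%:R by rewrite ltr0n ltnW.
rewrite ler_pdivrMr // -ler_pdivrMl //; apply: ltW.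
by apply: lt_le_trans (truncnS_gt _) _; rewrite mulrC ler_nat.
Qed.
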